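(* Given $A_7,A_8\in\mathbb R$, there exist $\gamma_2,\gamma_3\in C^\infty([-1,1])$ such that \[ \gamma_2(t)=\begin{cases}-\frac12A_7^2t & t\ge\frac34\\ -\frac12A_8^2t & t\le-\frac34\end{cases},\qquad \gamma_3(t)=\begin{cases}A_7t & t\ge\frac34\\ A_8t & t\le-\frac34\end{cases}, \] and $2\gamma_2'+(\gamma_3')^2=0$ on $[-1,1]$. *)

From Stdlib Require Import Reals.
From Coquelicot Require Import Coquelicot.
Open Scope R_scope.

Definition smooth_on_I (f : R -> R) : Prop :=
  forall (n : nat) (x : R), -1 <= x <= 1 -> ex_derive (Derive_n f n) x.

(* The equation says [gamma3' = v] and [gamma2' = -v^2/2] for one smooth profile [v]; the
   boundary conditions ask that [v] equal [A7] near [1] and [A8] near [-1], and that over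
   [[-3/4, 3/4]] both [∫ v] and [∫ v^2] agree with those of the piecewise constant profile.
   Take [v = (A7 + A8)/2 + (A7 - A8)/2 w] with [w] an odd smooth step from [-1] to [1] whose
   square has mean [1] on [[-3/4, 3/4]].  Such a [w] is [s + x s''] for the standard smooth
   step [s] built from [e^(-1/t)]: [∫ s^2 <= 3/2], and [∫ t s''(t) = -2] forces [∫ s''^2 > 0],
   so the quadratic equation for [x] has a real root. *)

From Stdlib Require Import Reals Lra Lia FunctionalExtensionality.
From Coquelicot Require Import Coquelicot.
Open Scope R_scope.

Fixpoint Cn (n : nat) (f : R -> R) : Prop :=
  match n with
  | O => True
  | S n => exists f', (forall x, is_derive f x (f' x)) /\ Cn n f'
  end.

Definition smooth (f : R -> R) : Prop := forall n, Cn n f.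

Lemma Cn_weaken n : forall f, Cn (S n) f -> Cn n f.
Proof.
  induction n as [|n IH]; intros f [f' [Df Cf']]; simpl; auto.
  exists f'; auto.
Qed.

Lemma Cn_ext n f g : (forall x, f x = g x) -> Cn n f -> Cn n g.
Proof.
  destruct n as [|n]; intros Efg; simpl; auto.
  intros [f' [Df Cf']]. exists f'; split; auto.
  intros x; apply is_derive_ext with f; auto.
Qed.

Lemma Cn_const n : forall c, Cn n (fun _ => c).
Proof.
  induction n; intros c; simpl; auto.
  exists (fun _ => 0); split; auto. intros x; exact (is_derive_const c x).
Qed.

Lemma Cn_id n : Cn n (fun x => x).
Proof.
  destruct n; simpl; auto.
  exists (fun _ => 1); split; [intros x; exact (is_derive_id x) | apply Cn_const].
Qed.

Lemma Cn_plus n : forall f g, Cn n f -> Cn n g -> Cn n (fun x => f x + g x).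
Proof.
  induction n as [|n IH]; intros f g; simpl; auto.
  intros [f' [Df Cf']] [g' [Dg Cg']].
  exists (fun x => f' x + g' x); split; auto.
  intros x; apply (is_derive_plus f g); auto.
Qed.

Lemma Cn_mult n : forall f g, Cn n f -> Cn n g -> Cn n (fun x => f x * g x).
Proof.
  induction n as [|n IH]; intros f g Cf Cg; simpl; auto.
  pose proof (Cn_weaken _ _ Cf) as Cf0; pose proof (Cn_weaken _ _ Cg) as Cg0.
  destruct Cf as [f' [Df Cf']], Cg as [g' [Dg Cg']].
  exists (fun x => f' x * g x + f x * g' x); split.
  - intros x; apply (is_derive_mult f g); auto. intros; apply Rmult_comm.
  - apply Cn_plus; apply IH; auto.
Qed.

Lemma Cn_comp n : forall f g, Cn n f -> Cn n g -> Cn n (fun x => f (g x)).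
Proof.
  induction n as [|n IH]; intros f g Cf Cg; simpl; auto.
  pose proof (Cn_weaken _ _ Cf) as Cf0; pose proof (Cn_weaken _ _ Cg) as Cg0.
  destruct Cf as [f' [Df Cf']], Cg as [g' [Dg Cg']].
  exists (fun x => g' x * f' (g x)); split.
  - intros x; exact (is_derive_comp f g x _ _ (Df (g x)) (Dg x)).
  - apply Cn_mult; auto.
Qed.

Lemma Cn_inv n : forall g, (forall x, g x <> 0) -> Cn n g -> Cn n (fun x => / g x).
Proof.
  induction n as [|n IH]; intros g Hg Cg; simpl; auto.
  pose proof (Cn_weaken _ _ Cg) as Cg0.
  destruct Cg as [g' [Dg Cg']].
  exists (fun x => - g' x / g x ^ 2); split.
  - intros x; exact (is_derive_inv g x _ (Dg x) (Hg x)).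
  - apply Cn_ext with (fun x => (-1 * g' x) * (/ g x * / g x)).
    { intros x; field; auto. }
    apply Cn_mult; [apply (Cn_mult n (fun _ => -1)); auto; apply Cn_const|].
    apply Cn_mult; apply IH; auto.
Qed.

Lemma Cn_ex_derive_Derive_n n : forall f, Cn (S n) f -> forall x, ex_derive (Derive_n f n) x.
Proof.
  induction n as [|n IH]; intros f [f' [Df Cf']] x.
  - exists (f' x); apply Df.
  - replace (Derive_n f (S n)) with (Derive_n f' n).
    { apply IH; auto. }
    apply functional_extensionality; intros y.
    rewrite <- Nat.add_1_r, <- Derive_n_comp. apply Derive_n_ext.
    intros z; symmetry; apply is_derive_unique, Df.
Qed.

Lemma smooth_ext f g : (forall x, f x = g x) -> smooth f -> smooth g.
Proof. intros Efg Sf n; apply Cn_ext with f; auto. Qed.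

Lemma smooth_const c : smooth (fun _ => c).
Proof. intros n; apply Cn_const. Qed.

Lemma smooth_id : smooth (fun x => x).
Proof. intros n; apply Cn_id. Qed.

Lemma smooth_plus f g : smooth f -> smooth g -> smooth (fun x => f x + g x).
Proof. intros Sf Sg n; apply Cn_plus; auto. Qed.

Lemma smooth_mult f g : smooth f -> smooth g -> smooth (fun x => f x * g x).
Proof. intros Sf Sg n; apply Cn_mult; auto. Qed.

Lemma smooth_comp f g : smooth f -> smooth g -> smooth (fun x => f (g x)).
Proof. intros Sf Sg n; apply Cn_comp; auto. Qed.

Lemma smooth_inv g : (forall x, g x <> 0) -> smooth g -> smooth (fun x => / g x).
Proof. intros Hg Sg n; apply Cn_inv; auto. Qed.

Lemma smooth_is_derive f : smooth f -> forall x, is_derive f x (Derive f x).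
Proof.
  intros Sf x. destruct (Sf 1%nat) as [f' [Df _]].
  rewrite (is_derive_unique _ _ _ (Df x)); auto.
Qed.

Lemma smooth_Derive f : smooth f -> smooth (Derive f).
Proof.
  intros Sf n. destruct (Sf (S n)) as [f' [Df Cf']].
  apply Cn_ext with f'; auto. intros x; symmetry; apply is_derive_unique, Df.
Qed.

Lemma smooth_continuous f : smooth f -> forall x, continuous f x.
Proof.
  intros Sf x. apply (ex_derive_continuous f). eexists; apply smooth_is_derive, Sf.
Qed.

Lemma smooth_is_RInt f a b : smooth f -> is_RInt f a b (RInt f a b).
Proof.
  intros Sf. apply (@RInt_correct R_CompleteNormedModule).
  apply (@ex_RInt_continuous R_CompleteNormedModule).
  intros z _; apply smooth_continuous, Sf.
Qed.

Lemma is_derive_RInt_smooth g a t : smooth g -> is_derive (fun s => RInt g a s) t (g t).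
Proof.
  intros Sg. apply is_derive_RInt with a.
  - exists (mkposreal 1 Rlt_0_1); intros y _. apply smooth_is_RInt, Sg.
  - apply smooth_continuous, Sg.
Qed.

Lemma smooth_RInt g a : smooth g -> smooth (fun t => RInt g a t).
Proof.
  intros Sg [|n]; simpl; auto.
  exists g; split; [intros t; apply is_derive_RInt_smooth, Sg | apply Sg].
Qed.

Lemma smooth_smooth_on_I f : smooth f -> smooth_on_I f.
Proof. intros Sf n x _; apply Cn_ex_derive_Derive_n, Sf. Qed.

Lemma locally_Rabs x e (P : R -> Prop) :
  0 < e -> (forall y, Rabs (y - x) < e -> P y) -> locally x P.
Proof. intros He HP. exists (mkposreal e He). intros y Hy; apply HP, Hy. Qed.

Inductive is_poly : (R -> R) -> Prop :=
  | is_poly_const c : is_poly (fun _ => c)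
  | is_poly_id : is_poly (fun x => x)
  | is_poly_plus p q : is_poly p -> is_poly q -> is_poly (fun x => p x + q x)
  | is_poly_mult p q : is_poly p -> is_poly q -> is_poly (fun x => p x * q x).

Lemma is_poly_derive p :
  is_poly p -> exists p', is_poly p' /\ forall x, is_derive p x (p' x).
Proof.
  induction 1 as [c| |p q _ [p' [Pp' Dp]] _ [q' [Pq' Dq]]
                 |p q Pp [p' [Pp' Dp]] Pq [q' [Pq' Dq]]].
  - exists (fun _ => 0); split; [constructor | intros x; exact (is_derive_const c x)].
  - exists (fun _ => 1); split; [constructor | intros x; exact (is_derive_id x)].
  - exists (fun x => p' x + q' x); split; [constructor; auto|].
    intros x; exact (is_derive_plus p q x _ _ (Dp x) (Dq x)).
  - exists (fun x => p' x * q x + p x * q' x); split; [repeat constructor; auto|].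
    intros x; exact (is_derive_mult p q x _ _ (Dp x) (Dq x) Rmult_comm).
Qed.

Lemma is_poly_bound p :
  is_poly p -> exists C k, 0 <= C /\ forall y, 1 <= y -> Rabs (p y) <= C * y ^ k.
Proof.
  induction 1 as [c| |p q _ [C1 [k1 [HC1 B1]]] _ [C2 [k2 [HC2 B2]]]
                 |p q _ [C1 [k1 [HC1 B1]]] _ [C2 [k2 [HC2 B2]]]].
  - exists (Rabs c), 0%nat; split; [apply Rabs_pos | intros; simpl; lra].
  - exists 1, 1%nat; split; [lra|]. intros y Hy; simpl. rewrite Rabs_pos_eq; lra.
  - exists (C1 + C2), (Nat.max k1 k2); split; [lra|]. intros y Hy.
    assert (y ^ k1 <= y ^ Nat.max k1 k2) by (apply Rle_pow; auto; lia).
    assert (y ^ k2 <= y ^ Nat.max k1 k2) by (apply Rle_pow; auto; lia).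
    specialize (B1 y Hy); specialize (B2 y Hy).
    pose proof (Rabs_triang (p y) (q y)).
    assert (C1 * y ^ k1 <= C1 * y ^ Nat.max k1 k2) by (apply Rmult_le_compat_l; auto).
    assert (C2 * y ^ k2 <= C2 * y ^ Nat.max k1 k2) by (apply Rmult_le_compat_l; auto).
    lra.
  - exists (C1 * C2), (k1 + k2)%nat; split; [apply Rmult_le_pos; auto|]. intros y Hy.
    rewrite Rabs_mult, pow_add.
    replace (C1 * C2 * (y ^ k1 * y ^ k2)) with ((C1 * y ^ k1) * (C2 * y ^ k2)) by ring.
    apply Rmult_le_compat; auto using Rabs_pos.
Qed.

Lemma exp_mult_INR n x : exp (INR n * x) = exp x ^ n.
Proof.
  induction n as [|n IH]; [simpl; rewrite Rmult_0_l, exp_0; auto|].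
  rewrite S_INR, Rmult_plus_distr_r, Rmult_1_l, exp_plus, IH; simpl; ring.
Qed.

Lemma pow_le_exp m y : 0 <= y -> (y / INR (S m)) ^ S m <= exp y.
Proof.
  intros Hy.
  assert (Hm : 0 < INR (S m)) by (apply lt_0_INR; lia).
  assert (Hq : 0 <= y / INR (S m)) by (apply Rdiv_le_0_compat; lra).
  replace (exp y) with (exp (y / INR (S m)) ^ S m)
    by (rewrite <- exp_mult_INR; f_equal; field; lra).
  apply pow_incr; split; auto.
  pose proof (exp_ineq1_le (y / INR (S m))); lra.
Qed.

(* With [y = 1/h]: [e^(-y)] beats every power of [y], in particular [|p y| y^2]. *)
Lemma is_poly_exp_inv_bound p :
  is_poly p -> exists K, 0 <= K /\
    forall h, 0 < h <= 1 -> Rabs (p (/ h) * exp (- / h)) <= K * h ^ 2.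
Proof.
  intros Pp. destruct (is_poly_bound p Pp) as [C [k [HC Bp]]].
  set (M := INR (S (S k)) ^ S (S k)).
  assert (HM : 0 < M) by (apply pow_lt, lt_0_INR; lia).
  exists (C * M); split; [apply Rmult_le_pos; lra|].
  intros h Hh. set (y := / h).
  assert (Hy : 1 <= y) by (unfold y; rewrite <- Rinv_1; apply Rinv_le_contravar; lra).
  replace h with (/ y) by (unfold y; apply Rinv_inv).
  clearbody y. clear Hh.
  rewrite Rabs_mult, (Rabs_pos_eq (exp _)), exp_Ropp by (left; apply exp_pos).
  assert (Hexp : y ^ S (S k) / M <= exp y).
  { eapply Rle_trans; [|apply (pow_le_exp (S k)); lra].
    unfold M, Rdiv; rewrite Rpow_mult_distr, pow_inv; lra. }
  assert (Hyk : 0 < y ^ k) by (apply pow_lt; lra).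
  assert (Hpos : 0 < y ^ S (S k) / M) by (apply Rdiv_lt_0_compat; [apply pow_lt; lra | auto]).
  eapply Rle_trans.
  { apply Rmult_le_compat; [apply Rabs_pos | left; apply Rinv_0_lt_compat, exp_pos
                           | apply Bp, Hy | apply Rinv_le_contravar; eauto]. }
  replace (y ^ S (S k)) with (y ^ k * y ^ 2) by (rewrite <- pow_add; f_equal; lia).
  right; field; lra.
Qed.

Lemma is_derive_0_of_sq_bound g K :
  g 0 = 0 -> (forall h, Rabs h < 1 -> Rabs (g h) <= K * h ^ 2) -> is_derive g 0 0.
Proof.
  intros g0 Bg. apply is_derive_Reals. intros eps Heps.
  assert (HK : 0 <= K) by (pose proof (Bg (1/2) ltac:(rewrite Rabs_pos_eq; lra));
                           pose proof (Rabs_pos (g (1/2))); nra).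
  assert (Hd : 0 < Rmin 1 (eps / (K + 1))).
  { apply Rmin_glb_lt; [lra | apply Rdiv_lt_0_compat; lra]. }
  exists (mkposreal _ Hd). intros h Hh Hlt; simpl in Hlt.
  rewrite Rplus_0_l, g0, !Rminus_0_r.
  assert (Ha : 0 < Rabs h) by (apply Rabs_pos_lt; auto).
  assert (H1 : Rabs h < 1) by (eapply Rlt_le_trans; [apply Hlt | apply Rmin_l]).
  assert (H2 : Rabs h < eps / (K + 1)) by (eapply Rlt_le_trans; [apply Hlt | apply Rmin_r]).
  assert (H3 : Rabs h * (K + 1) < eps).
  { apply (Rmult_lt_compat_r (K + 1)) in H2; [|lra].
    unfold Rdiv in H2; rewrite Rmult_assoc, Rinv_l in H2 by lra; lra. }
  specialize (Bg h H1); rewrite <- pow2_abs in Bg.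
  unfold Rdiv; rewrite Rabs_mult, Rabs_inv.
  apply Rmult_lt_reg_r with (Rabs h); auto.
  rewrite Rmult_assoc, Rinv_l by lra; nra.
Qed.

Definition flat (p : R -> R) (x : R) : R :=
  if Rlt_dec 0 x then p (/ x) * exp (- / x) else 0.

(* [d/dx (p(1/x) e^(-1/x)) = q(1/x) e^(-1/x)] with [q y = y^2 (p y - p' y)]. *)
Lemma is_derive_flat p :
  is_poly p -> exists q, is_poly q /\ forall x, is_derive (flat p) x (flat q x).
Proof.
  intros Pp. destruct (is_poly_derive p Pp) as [p' [Pp' Dp]].
  exists (fun y => (y * y) * (p y + -1 * p' y)); split; [repeat constructor; auto|].
  intros x. destruct (Rtotal_order x 0) as [Hx|[->|Hx]].
  - apply is_derive_ext_loc with (fun _ => 0).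
    { apply locally_Rabs with (- x); [lra|]. intros y Hy; apply Rabs_def2 in Hy.
      unfold flat; destruct (Rlt_dec 0 y); auto; lra. }
    unfold flat; destruct (Rlt_dec 0 x); [lra | exact (is_derive_const 0 x)].
  - destruct (is_poly_exp_inv_bound p Pp) as [K [HK Bp]].
    unfold flat at 2; destruct (Rlt_dec 0 0); [lra|].
    apply is_derive_0_of_sq_bound with K.
    + unfold flat; destruct (Rlt_dec 0 0); auto; lra.
    + intros h Hh; apply Rabs_def2 in Hh. unfold flat; destruct (Rlt_dec 0 h).
      * apply Bp; lra.
      * rewrite Rabs_R0; apply Rmult_le_pos; auto; apply pow2_ge_0.
  - apply is_derive_ext_loc with (fun t => p (/ t) * exp (- / t)).
    { apply locally_Rabs with x; [lra|]. intros y Hy; apply Rabs_def2 in Hy.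
      unfold flat; destruct (Rlt_dec 0 y); auto; lra. }
    assert (Hx0 : x <> 0) by lra.
    pose proof (is_derive_inv (fun t => t) x 1 (is_derive_id x) Hx0) as Dinv.
    pose proof (is_derive_comp p _ x _ _ (Dp (/ x)) Dinv) as D1.
    pose proof (is_derive_comp exp _ x _ _ (is_derive_exp _) (is_derive_opp _ x _ Dinv)) as D2.
    pose proof (is_derive_mult _ _ x _ _ D1 D2 Rmult_comm) as D.
    unfold flat; destruct (Rlt_dec 0 x); [|lra].
    replace (/ x * / x * (p (/ x) + -1 * p' (/ x)) * exp (- / x)) with
      (plus (mult (scal (- 1 / x ^ 2) (p' (/ x))) (exp (- / x)))
            (mult (p (/ x)) (scal (opp (- 1 / x ^ 2)) (exp (- / x))))).
    { exact D. }
    unfold plus, mult, scal, opp; simpl; unfold mult; simpl. field; auto.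
Qed.

Lemma smooth_flat p : is_poly p -> smooth (flat p).
Proof.
  intros Pp n; revert p Pp. induction n as [|n IH]; intros p Pp; simpl; auto.
  destruct (is_derive_flat p Pp) as [q [Pq Dq]]. exists (flat q); auto.
Qed.

Definition exp_neg_inv : R -> R := flat (fun _ => 1).

Lemma exp_neg_inv_nonneg x : 0 <= exp_neg_inv x.
Proof.
  unfold exp_neg_inv, flat; destruct (Rlt_dec 0 x); [|lra].
  rewrite Rmult_1_l; left; apply exp_pos.
Qed.

Lemma exp_neg_inv_pos x : 0 < x -> 0 < exp_neg_inv x.
Proof.
  intros Hx; unfold exp_neg_inv, flat; destruct (Rlt_dec 0 x); [|lra].
  rewrite Rmult_1_l; apply exp_pos.
Qed.

Lemma exp_neg_inv_nonpos x : x <= 0 -> exp_neg_inv x = 0.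
Proof. intros Hx; unfold exp_neg_inv, flat; destruct (Rlt_dec 0 x); auto; lra. Qed.

Lemma smooth_exp_neg_inv : smooth exp_neg_inv.
Proof. apply smooth_flat; constructor. Qed.

Definition smooth_step (x : R) : R :=
  exp_neg_inv x / (exp_neg_inv x + exp_neg_inv (1 - x)).

Lemma smooth_step_denom_pos x : 0 < exp_neg_inv x + exp_neg_inv (1 - x).
Proof.
  pose proof (exp_neg_inv_nonneg x); pose proof (exp_neg_inv_nonneg (1 - x)).
  destruct (Rlt_dec 0 x) as [Hx|Hx].
  - pose proof (exp_neg_inv_pos x Hx); lra.
  - pose proof (exp_neg_inv_pos (1 - x) ltac:(lra)); lra.
Qed.

Lemma smooth_smooth_step : smooth smooth_step.
Proof.
  apply smooth_mult; [apply smooth_exp_neg_inv|].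
  apply smooth_inv; [intros x; pose proof (smooth_step_denom_pos x); lra|].
  apply smooth_plus; [apply smooth_exp_neg_inv|].
  apply (smooth_comp exp_neg_inv (fun x => 1 - x)); [apply smooth_exp_neg_inv|].
  apply smooth_ext with (fun x => 1 + -1 * x); [intros x; ring|].
  apply smooth_plus; [apply smooth_const|].
  apply (smooth_mult (fun _ => -1)); [apply smooth_const | apply smooth_id].
Qed.

Lemma smooth_step_1minus x : smooth_step (1 - x) = 1 - smooth_step x.
Proof.
  unfold smooth_step. replace (1 - (1 - x)) with x by ring.
  pose proof (smooth_step_denom_pos x); field; lra.
Qed.

Lemma smooth_step_bound x : 0 <= smooth_step x <= 1.
Proof.
  unfold smooth_step. pose proof (smooth_step_denom_pos x).
  pose proof (exp_neg_inv_nonneg x); pose proof (exp_neg_inv_nonneg (1 - x)).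
  split; [apply Rdiv_le_0_compat; lra|].
  apply Rmult_le_reg_r with (exp_neg_inv x + exp_neg_inv (1 - x)); auto.
  unfold Rdiv; rewrite Rmult_assoc, Rinv_l by lra; lra.
Qed.

Definition odd_step (t : R) : R := 2 * smooth_step (t + / 2) - 1.

Lemma odd_step_opp t : odd_step (- t) = - odd_step t.
Proof.
  unfold odd_step. replace (- t + / 2) with (1 - (t + / 2)) by field.
  rewrite smooth_step_1minus; ring.
Qed.

Lemma odd_step_right t : / 2 <= t -> odd_step t = 1.
Proof.
  intros Ht; unfold odd_step, smooth_step.
  rewrite (exp_neg_inv_nonpos (1 - (t + / 2))) by lra.
  pose proof (exp_neg_inv_pos (t + / 2) ltac:(lra)); field; lra.
Qed.

Lemma odd_step_left t : t <= - / 2 -> odd_step t = -1.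
Proof.
  intros Ht; unfold odd_step, smooth_step.
  rewrite (exp_neg_inv_nonpos (t + / 2)) by lra. unfold Rdiv; ring.
Qed.

Lemma odd_step_bound t : -1 <= odd_step t <= 1.
Proof. unfold odd_step; pose proof (smooth_step_bound (t + / 2)); lra. Qed.

Lemma smooth_odd_step : smooth odd_step.
Proof.
  unfold odd_step. apply (smooth_plus _ (fun _ => -1)); [|apply smooth_const].
  apply (smooth_mult (fun _ => 2)); [apply smooth_const|].
  apply (smooth_comp smooth_step (fun t => t + / 2)); [apply smooth_smooth_step|].
  apply smooth_plus; [apply smooth_id | apply smooth_const].
Qed.

Lemma is_RInt_ext_R (f g : R -> R) a b l :
  (forall x, f x = g x) -> is_RInt f a b l -> is_RInt g a b l.
Proof. intros Efg; apply is_RInt_ext; intros x _; apply Efg. Qed.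

Lemma is_RInt_lin (f g : R -> R) a b If Ig (al be : R) :
  is_RInt f a b If -> is_RInt g a b Ig ->
  is_RInt (fun x => al * f x + be * g x) a b (al * If + be * Ig).
Proof.
  intros Hf Hg.
  exact (is_RInt_plus _ _ a b _ _ (is_RInt_scal f a b al If Hf) (is_RInt_scal g a b be Ig Hg)).
Qed.

Lemma is_RInt_odd f a :
  (forall x, continuous f x) -> (forall x, f (- x) = - f x) -> is_RInt f (- a) a 0.
Proof.
  intros Cf Of.
  assert (If : is_RInt f (- a) a (RInt f (- a) a)).
  { apply (@RInt_correct R_CompleteNormedModule), (@ex_RInt_continuous R_CompleteNormedModule).
    intros; apply Cf. }
  assert (Ineg : is_RInt f (- a) a (opp (RInt f (- a) a))).
  { apply is_RInt_swap in If.
    pose proof (is_RInt_comp_opp f (- a) a _ ltac:(rewrite Ropp_involutive; exact If)) as H.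
    eapply is_RInt_ext; [|exact H]. intros x _; simpl; rewrite Of; unfold opp; simpl; ring. }
  pose proof (is_RInt_unique _ _ _ _ If) as U1; pose proof (is_RInt_unique _ _ _ _ Ineg) as U2.
  unfold opp in U2; simpl in U2.
  replace 0 with (RInt f (- a) a) by lra. exact If.
Qed.

Lemma Derive_locally_const f k x e :
  0 < e -> (forall y, Rabs (y - x) < e -> f y = k) -> Derive f x = 0.
Proof.
  intros He Hf. apply is_derive_unique, is_derive_ext_loc with (fun _ => k).
  - apply locally_Rabs with e; auto. intros y Hy; symmetry; apply Hf, Hy.
  - exact (is_derive_const k x).
Qed.

(* If [f] pairs nontrivially with some [g], then [f] is not [0] in [L^2]: otherwise
   [∫ (g - λ f)^2 = ∫ g^2 - 2 λ ∫ f g] would be negative for a suitable [λ]. *)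
Lemma RInt_sq_pos_of_pairing (f g : R -> R) a b I :
  a <= b -> (forall x, continuous f x) -> (forall x, continuous g x) ->
  is_RInt (fun t => f t * g t) a b I -> I <> 0 ->
  0 < RInt (fun t => f t * f t) a b.
Proof.
  intros Hab Cf Cg Ifg HI.
  assert (Ex : forall h : R -> R, (forall x, continuous h x) -> is_RInt h a b (RInt h a b)).
  { intros h Ch. apply (@RInt_correct R_CompleteNormedModule),
      (@ex_RInt_continuous R_CompleteNormedModule); auto. }
  assert (Cmult : forall h k : R -> R, (forall x, continuous h x) -> (forall x, continuous k x) ->
            forall x, continuous (fun t => h t * k t) x).
  { intros h k Ch Ck x; apply (continuous_mult h k); auto. }
  set (F := RInt (fun t => f t * f t) a b).
  set (G := RInt (fun t => g t * g t) a b).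
  assert (IF : is_RInt (fun t => f t * f t) a b F) by (apply Ex, Cmult; auto).
  assert (IG : is_RInt (fun t => g t * g t) a b G) by (apply Ex, Cmult; auto).
  assert (F0 : 0 <= F).
  { apply RInt_ge_0; auto; [eexists; exact IF | intros x _; apply Rle_0_sqr]. }
  destruct (Rle_lt_dec F 0) as [Fle|]; auto.
  set (l := (G + 1) / (2 * I)).
  pose proof (is_RInt_lin _ _ _ _ _ _ 1 (l * l) (is_RInt_lin _ _ _ _ _ _ 1 (-2 * l) IG Ifg) IF)
    as Isq.
  assert (Hsq : is_RInt (fun t => (g t - l * f t) * (g t - l * f t)) a b
                  (1 * (1 * G + -2 * l * I) + l * l * F)).
  { eapply is_RInt_ext_R; [|exact Isq]. intros x; cbv beta; ring. }
  assert (Hnn : 0 <= 1 * (1 * G + -2 * l * I) + l * l * F).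
  { rewrite <- (is_RInt_unique _ _ _ _ Hsq). apply RInt_ge_0; auto.
    - eexists; exact Hsq.
    - intros x _; apply Rle_0_sqr. }
  replace F with 0 in Hnn by lra.
  replace (-2 * l * I) with (- (G + 1)) in Hnn by (unfold l; field; auto). lra.
Qed.

Lemma quadratic_has_root A B C K : 0 < C -> A <= K -> exists x, A + 2 * B * x + C * (x * x) = K.
Proof.
  intros HC HA.
  assert (HD : 0 <= B * B + C * (K - A)) by nra.
  exists ((sqrt (B * B + C * (K - A)) - B) / C).
  pose proof (sqrt_sqrt _ HD).
  apply Rmult_eq_reg_l with C; [|lra]. field_simplify; [nra | lra].
Qed.

Definition odd_step2 : R -> R := Derive (Derive odd_step).

Lemma smooth_odd_step2 : smooth odd_step2.
Proof. apply smooth_Derive, smooth_Derive, smooth_odd_step. Qed.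

Lemma Derive_odd_step_out x : / 2 < Rabs x -> Derive odd_step x = 0.
Proof.
  intros Hx. destruct (Rle_dec 0 x).
  - rewrite Rabs_pos_eq in Hx by auto.
    apply Derive_locally_const with 1 (x - / 2); [lra|].
    intros y Hy; apply Rabs_def2 in Hy; apply odd_step_right; lra.
  - rewrite Rabs_left in Hx by lra.
    apply Derive_locally_const with (-1) (- x - / 2); [lra|].
    intros y Hy; apply Rabs_def2 in Hy; apply odd_step_left; lra.
Qed.

Lemma odd_step2_out x : / 2 < Rabs x -> odd_step2 x = 0.
Proof.
  intros Hx. apply Derive_locally_const with 0 (Rabs x - / 2); [lra|].
  intros y Hy. apply Derive_odd_step_out.
  pose proof (Rabs_triang_inv x (x - y)). rewrite Rabs_minus_sym in Hy.
  replace (x - (x - y)) with y in * by ring. lra.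
Qed.

Lemma is_RInt_odd_step a : is_RInt odd_step (- a) a 0.
Proof. apply is_RInt_odd; [apply smooth_continuous, smooth_odd_step | apply odd_step_opp]. Qed.

Lemma RInt_odd_step_sq_le c : 0 <= c -> RInt (fun t => odd_step t * odd_step t) (- c) c <= 2 * c.
Proof.
  intros Hc. replace (2 * c) with (RInt (fun _ => 1) (- c) c)
    by (rewrite RInt_const; unfold scal; simpl; unfold mult; simpl; ring).
  apply RInt_le; [lra | | |].
  - eexists; apply smooth_is_RInt, smooth_mult; apply smooth_odd_step.
  - eexists; apply is_RInt_const.
  - intros x _; pose proof (odd_step_bound x); nra.
Qed.

Section OddStepIntegrals.

Variable c : R.
Hypothesis Hc : / 2 < c.

Let abs_c_gt_half : / 2 < Rabs c.
Proof. rewrite Rabs_pos_eq; lra. Qed.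

Let abs_opp_c_gt_half : / 2 < Rabs (- c).
Proof. rewrite Rabs_left; lra. Qed.

Lemma is_RInt_odd_step2 : is_RInt odd_step2 (- c) c 0.
Proof.
  replace 0 with (minus (Derive odd_step c) (Derive odd_step (- c))).
  - apply (@is_RInt_derive R_CompleteNormedModule).
    + intros x _; apply smooth_is_derive, smooth_Derive, smooth_odd_step.
    + intros x _; apply smooth_continuous, smooth_odd_step2.
  - rewrite (Derive_odd_step_out _ abs_c_gt_half), (Derive_odd_step_out _ abs_opp_c_gt_half).
    unfold minus, plus, opp; simpl; ring.
Qed.

(* Integration by parts with [s = odd_step]: [∫ t s'' = [t s' - s]], and [s' = 0], [s = ±1] at [±c]. *)
Lemma is_RInt_id_mult_odd_step2 : is_RInt (fun t => t * odd_step2 t) (- c) c (-2).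
Proof.
  set (F := fun t => t * Derive odd_step t - odd_step t).
  replace (-2) with (minus (F c) (F (- c))).
  - apply (@is_RInt_derive R_CompleteNormedModule).
    + intros x _.
      pose proof (smooth_is_derive _ smooth_odd_step x) as D1.
      pose proof (smooth_is_derive _ (smooth_Derive _ smooth_odd_step) x) as D2.
      pose proof (is_derive_minus _ _ x _ _
                    (is_derive_mult (fun t => t) _ x _ _ (is_derive_id x) D2 Rmult_comm) D1) as D.
      replace (x * odd_step2 x) with (minus (plus (mult one (Derive odd_step x))
                 (mult x (Derive (Derive odd_step) x))) (Derive odd_step x)); [exact D|].
      unfold minus, plus, opp, mult, one; simpl. unfold odd_step2; ring.
    + intros x _; apply smooth_continuous, smooth_mult; [apply smooth_id | apply smooth_odd_step2].
  - unfold F. rewrite (Derive_odd_step_out _ abs_c_gt_half), (Derive_odd_step_out _ abs_opp_c_gt_half).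
    rewrite odd_step_right, odd_step_left by lra.
    unfold minus, plus, opp; simpl; ring.
Qed.

Lemma RInt_odd_step2_sq_pos : 0 < RInt (fun t => odd_step2 t * odd_step2 t) (- c) c.
Proof.
  apply (RInt_sq_pos_of_pairing _ (fun t => t) _ _ (-2)); try lra.
  - apply smooth_continuous, smooth_odd_step2.
  - intros x; apply continuous_id.
  - eapply is_RInt_ext_R; [|exact is_RInt_id_mult_odd_step2]. intros x; cbv beta; ring.
Qed.

End OddStepIntegrals.

(* [w = s + x s''] with [s = odd_step]: adding [s''] (supported in [[-1/2, 1/2]], integral [0])
   keeps the end values and the zero mean, and [x] solves the quadratic [∫ w^2 = 2c]. *)
Lemma normalized_odd_step c : / 2 < c ->
  exists w, smooth w /\
    (forall t, c <= t -> w t = 1) /\ (forall t, t <= - c -> w t = -1) /\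
    is_RInt w (- c) c 0 /\ is_RInt (fun t => w t * w t) (- c) c (2 * c).
Proof.
  intros Hc.
  set (A := RInt (fun t => odd_step t * odd_step t) (- c) c).
  set (B := RInt (fun t => odd_step t * odd_step2 t) (- c) c).
  set (C := RInt (fun t => odd_step2 t * odd_step2 t) (- c) c).
  assert (IA : is_RInt (fun t => odd_step t * odd_step t) (- c) c A)
    by (apply smooth_is_RInt, smooth_mult; apply smooth_odd_step).
  assert (IB : is_RInt (fun t => odd_step t * odd_step2 t) (- c) c B)
    by (apply smooth_is_RInt, smooth_mult; [apply smooth_odd_step | apply smooth_odd_step2]).
  assert (IC : is_RInt (fun t => odd_step2 t * odd_step2 t) (- c) c C)
    by (apply smooth_is_RInt, smooth_mult; apply smooth_odd_step2).
  destruct (quadratic_has_root A B C (2 * c)) as [x Hx].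
  { apply RInt_odd_step2_sq_pos, Hc. }
  { apply RInt_odd_step_sq_le; lra. }
  clearbody A B C.
  exists (fun t => odd_step t + x * odd_step2 t). split; [|split; [|split; [|split]]].
  - apply smooth_plus; [apply smooth_odd_step|].
    apply smooth_mult; [apply smooth_const | apply smooth_odd_step2].
  - intros t Ht. rewrite odd_step_right, odd_step2_out by (try rewrite Rabs_pos_eq; lra). ring.
  - intros t Ht. rewrite odd_step_left, odd_step2_out by (try rewrite Rabs_left; lra). ring.
  - pose proof (is_RInt_lin _ _ _ _ _ _ 1 x (is_RInt_odd_step c) (is_RInt_odd_step2 c Hc)) as I.
    replace 0 with (1 * 0 + x * 0) by ring.
    eapply is_RInt_ext_R; [|exact I]. intros t; cbv beta; ring.
  - rewrite <- Hx.
    pose proof (is_RInt_lin _ _ _ _ _ _ 1 (x * x) (is_RInt_lin _ _ _ _ _ _ 1 (2 * x) IA IB) IC) as I.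
    replace (A + 2 * B * x + C * (x * x)) with (1 * (1 * A + 2 * x * B) + x * x * C) by ring.
    eapply is_RInt_ext_R; [|exact I]. intros t; cbv beta; ring.
Qed.

Lemma smooth_profile a b c : / 2 < c ->
  exists v, smooth v /\
    (forall t, c <= t -> v t = a) /\ (forall t, t <= - c -> v t = b) /\
    is_RInt v (- c) c (c * (a + b)) /\
    is_RInt (fun t => v t * v t) (- c) c (c * (a ^ 2 + b ^ 2)).
Proof.
  intros Hc. destruct (normalized_odd_step c Hc) as [w [Sw [Wr [Wl [Iw Iw2]]]]].
  set (m := (a + b) / 2); set (d := (a - b) / 2).
  exists (fun t => m + d * w t). split; [|split; [|split; [|split]]].
  - apply smooth_plus; [apply smooth_const | apply smooth_mult; [apply smooth_const | auto]].
  - intros t Ht; rewrite Wr by auto; unfold m, d; field.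
  - intros t Ht; rewrite Wl by auto; unfold m, d; field.
  - pose proof (is_RInt_lin _ _ _ _ _ _ m d (is_RInt_const (- c) c 1) Iw) as I.
    replace (c * (a + b)) with (m * scal (c - - c) 1 + d * 0)
      by (unfold scal, m; simpl; unfold mult; simpl; field).
    eapply is_RInt_ext_R; [|exact I]. intros t; cbv beta; ring.
  - pose proof (is_RInt_lin _ _ _ _ _ _ 1 (d * d)
                  (is_RInt_lin _ _ _ _ _ _ (m * m) (2 * m * d) (is_RInt_const (- c) c 1) Iw) Iw2) as I.
    replace (c * (a ^ 2 + b ^ 2)) with (1 * (m * m * scal (c - - c) 1 + 2 * m * d * 0) + d * d * (2 * c))
      by (unfold scal, m, d; simpl; unfold mult; simpl; field).
    eapply is_RInt_ext_R; [|exact I]. intros t; cbv beta; ring.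
Qed.

Lemma smooth_primitive_linear_ends g a b c : 0 <= c -> smooth g ->
  (forall t, c <= t -> g t = a) -> (forall t, t <= - c -> g t = b) ->
  is_RInt g (- c) c (c * (a + b)) ->
  exists G, smooth G /\ (forall t, is_derive G t (g t)) /\
    (forall t, c <= t -> G t = a * t) /\ (forall t, t <= - c -> G t = b * t).
Proof.
  intros Hc Sg Gr Gl Ig.
  exists (fun t => c * a + RInt g c t). split; [|split; [|split]].
  - apply smooth_plus; [apply smooth_const | apply smooth_RInt, Sg].
  - intros t.
    pose proof (is_derive_plus _ _ t _ _ (is_derive_const (c * a) t) (is_derive_RInt_smooth g c t Sg)) as D.
    replace (g t) with (plus 0 (g t)) by (unfold plus; simpl; ring). exact D.
  - intros t Ht.
    assert (I : is_RInt g c t (scal (t - c) a)).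
    { apply (is_RInt_ext (fun _ => a)); [|exact (is_RInt_const c t a)].
      intros x Hx; rewrite Rmin_left in Hx by lra; symmetry; apply Gr; lra. }
    rewrite (is_RInt_unique _ _ _ _ I). unfold scal; simpl; unfold mult; simpl; ring.
  - intros t Ht.
    assert (Il : is_RInt g (- c) t (scal (t - - c) b)).
    { apply (is_RInt_ext (fun _ => b)); [|exact (is_RInt_const (- c) t b)].
      intros x Hx; rewrite Rmax_left in Hx by lra; symmetry; apply Gl; lra. }
    pose proof (is_RInt_Chasles g c (- c) t _ _ (is_RInt_swap _ _ _ _ Ig) Il) as I.
    rewrite (is_RInt_unique _ _ _ _ I).
    unfold plus, opp, scal; simpl; unfold mult; simpl; ring.
Qed.

Theorem lemma4p3 (A7 A8 : R) :
  exists gamma2 gamma3 : R -> R,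
    smooth_on_I gamma2 /\ smooth_on_I gamma3 /\
    (forall t, 3/4 <= t <= 1 -> gamma2 t = - (1/2) * A7 ^ 2 * t) /\
    (forall t, -1 <= t <= -(3/4) -> gamma2 t = - (1/2) * A8 ^ 2 * t) /\
    (forall t, 3/4 <= t <= 1 -> gamma3 t = A7 * t) /\
    (forall t, -1 <= t <= -(3/4) -> gamma3 t = A8 * t) /\
    (forall t, -1 <= t <= 1 ->
       2 * Derive gamma2 t + (Derive gamma3 t) ^ 2 = 0).
Proof.
  destruct (smooth_profile A7 A8 (3/4)) as [v [Sv [Vr [Vl [Iv Iv2]]]]]; [lra|].
  destruct (smooth_primitive_linear_ends v A7 A8 (3/4)) as [g3 [S3 [D3 [G3r G3l]]]]; auto; [lra|].
  destruct (smooth_primitive_linear_ends (fun t => - (1/2) * (v t * v t))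
              (- (1/2) * A7 ^ 2) (- (1/2) * A8 ^ 2) (3/4)) as [g2 [S2 [D2 [G2r G2l]]]].
  - lra.
  - apply smooth_mult; [apply smooth_const | apply smooth_mult; auto].
  - intros t Ht; rewrite Vr by auto; ring.
  - intros t Ht; rewrite Vl by auto; ring.
  - replace (3/4 * (- (1/2) * A7 ^ 2 + - (1/2) * A8 ^ 2))
      with (- (1/2) * (3/4 * (A7 ^ 2 + A8 ^ 2))) by ring.
    exact (is_RInt_scal _ _ _ _ _ Iv2).
  - exists g2, g3. repeat split; auto using smooth_smooth_on_I; intros t Ht.
    + apply G2r; lra.
    + apply G2l; lra.
    + apply G3r; lra.
    + apply G3l; lra.
    + rewrite (is_derive_unique _ _ _ (D2 t)), (is_derive_unique _ _ _ (D3 t)); field.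
Qed.
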